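(* Let $A$ be an annihilator locally $C^{\ast}$-algebra and $I$ a closed two-sided ideal of $A$. Then $I$ and $A/I$ are annihilator locally $C^{\ast}$-algebras, and $A$ is topologically ${}^{\ast}$-isomorphic to the Cartesian product $I\times A/I$.
   Context: Locally $C^{\ast}$-algebra: complete Hausdorff locally convex ${}^{\ast}$-algebra over $\mathbb{C}$ with jointly continuous multiplication, topology given by $C^{\ast}$-seminorms. Annihilator algebra: for every closed left ideal $J$ and closed right ideal $K$, $\mathrm{ran}(J)=0\iff J=A$ and $\mathrm{lan}(K)=0\iff K=A$, where $\mathrm{lan}(S)=\{a:aS=0\}$, $\mathrm{ran}(S)=\{a:Sa=0\}$. *)

From HB Require Import structures.
From mathcomp Require Import all_boot all_order all_algebra.
From mathcomp Require Import complex.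
From Stdlib Require Lists.List.
From mathcomp Require Import boolp classical_sets reals filter.
Set Implicit Arguments. Unset Strict Implicit. Unset Printing Implicit Defensive.
Import Order.TTheory GRing.Theory Num.Theory.
Local Open Scope ring_scope.
Local Open Scope classical_set_scope.

Notation cnorm := (@Normc.normc _).

(* Raw data of a (possibly non-unital) complex *-algebra equipped with a family
   of seminorms (indexed by lc_idx) defining its locally convex topology. *)
Record lcdata (R : realType) := LCData {
  lc_car : Type;
  lc_idx : Type;
  lc_zero : lc_car;
  lc_add : lc_car -> lc_car -> lc_car;
  lc_opp : lc_car -> lc_car;
  lc_scale : R[i] -> lc_car -> lc_car;
  lc_mul : lc_car -> lc_car -> lc_car;
  lc_star : lc_car -> lc_car;
  lc_sn : lc_idx -> lc_car -> R }.
Arguments LCData {R}.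
Arguments lc_sn {R} l i _.

Section LC.
Variable R : realType.
Variable A : lcdata R.
Local Notation T := (lc_car A).
Local Notation "0A" := (lc_zero A).
Local Notation "x .+ y" := (lc_add x y) (at level 50, left associativity).
Local Notation ".- x" := (lc_opp x) (at level 35).
Local Notation "a .* x" := (lc_scale a x) (at level 40).
Local Notation "x .x y" := (lc_mul x y) (at level 40, left associativity).
Local Notation p := (lc_sn A).
Local Notation lsub x y := (lc_add x (lc_opp y)).

Definition is_star_algebra : Prop :=
  (forall x y z : T, x .+ (y .+ z) = (x .+ y) .+ z) /\
  (forall x y : T, x .+ y = y .+ x) /\
  (forall x : T, 0A .+ x = x) /\
  (forall x : T, (.- x) .+ x = 0A) /\
  (forall (a : R[i]) (x y : T), a .* (x .+ y) = a .* x .+ a .* y) /\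
  (forall (a b : R[i]) (x : T), (a + b) .* x = a .* x .+ b .* x) /\
  (forall (a b : R[i]) (x : T), (a * b) .* x = a .* (b .* x)) /\
  (forall x : T, 1 .* x = x) /\
  (forall x y z : T, x .x (y .x z) = (x .x y) .x z) /\
  (forall x y z : T, x .x (y .+ z) = x .x y .+ x .x z) /\
  (forall x y z : T, (x .+ y) .x z = x .x z .+ y .x z) /\
  (forall (a : R[i]) (x y : T), a .* (x .x y) = (a .* x) .x y) /\
  (forall (a : R[i]) (x y : T), a .* (x .x y) = x .x (a .* y)) /\
  (forall x y : T, lc_star (x .+ y) = lc_star x .+ lc_star y) /\
  (forall (a : R[i]) (x : T), lc_star (a .* x) = (conjc a) .* lc_star x) /\
  (forall x y : T, lc_star (x .x y) = lc_star y .x lc_star x) /\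
  (forall x : T, lc_star (lc_star x) = x).

Definition is_Cstar_seminorm (q : T -> R) : Prop :=
  [/\ (forall x y, q (x .+ y) <= q x + q y),
      (forall a x, q (a .* x) = cnorm a * q x),
      (forall x y, q (x .x y) <= q x * q y) &
      (forall x, q (lc_star x .x x) = q x ^+ 2)].

Definition lc_ball (x : T) (F : seq (lc_idx A)) (e : R) : set T :=
  [set y | forall i, Stdlib.Lists.List.In i F -> p i (lsub y x) < e].

Definition lc_open (U : set T) : Prop :=
  forall x, U x -> exists (F : seq (lc_idx A)) (e : R), 0 < e /\ lc_ball x F e `<=` U.

Definition lc_closed (S : set T) : Prop := lc_open (~` S).

Definition lc_hausdorff : Prop := forall x : T, (forall i, p i x = 0%R) -> x = 0A.

Definition lc_complete : Prop :=
  forall F : set_system T, ProperFilter F ->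
    (forall i (e : R), 0 < e -> exists B, F B /\
        forall x y, B x -> B y -> p i (lsub x y) < e) ->
    exists x, forall i (e : R), 0 < e -> F [set y | p i (lsub y x) < e].

Definition locally_Cstar : Prop :=
  [/\ is_star_algebra, (forall i, is_Cstar_seminorm (p i)), lc_hausdorff & lc_complete].

Definition is_subspace (J : set T) : Prop :=
  [/\ J 0A, (forall x y, J x -> J y -> J (x .+ y)) & (forall a x, J x -> J (a .* x))].
Definition closed_left_ideal (J : set T) : Prop :=
  [/\ is_subspace J, (forall a x, J x -> J (a .x x)) & lc_closed J].
Definition closed_right_ideal (J : set T) : Prop :=
  [/\ is_subspace J, (forall a x, J x -> J (x .x a)) & lc_closed J].
Definition closed_ideal (J : set T) : Prop :=
  [/\ is_subspace J, (forall a x, J x -> J (a .x x)),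
      (forall a x, J x -> J (x .x a)) & lc_closed J].

Definition lan (S : set T) : set T := [set a | forall s, S s -> a .x s = 0A].
Definition ran (S : set T) : set T := [set a | forall s, S s -> s .x a = 0A].

Definition annihilator : Prop :=
  (forall J, closed_left_ideal J -> (ran J = [set 0A] <-> J = setT)) /\
  (forall K, closed_right_ideal K -> (lan K = [set 0A] <-> K = setT)).

End LC.

Definition annihilator_locally_Cstar (R : realType) (A : lcdata R) : Prop :=
  locally_Cstar A /\ annihilator A.

Definition lc_continuous (R : realType) (A B : lcdata R)
  (f : lc_car A -> lc_car B) : Prop :=
  forall U, lc_open U -> lc_open (f @^-1` U).

Definition top_star_iso (R : realType) (A B : lcdata R)
  (f : lc_car A -> lc_car B) : Prop :=
  (exists g : lc_car B -> lc_car A,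
        [/\ cancel f g, cancel g f & lc_continuous g]) /\
  [/\ lc_continuous f,
      (forall x y, f (lc_add x y) = lc_add (f x) (f y)),
      (forall a x, f (lc_scale a x) = lc_scale a (f x)),
      (forall x y, f (lc_mul x y) = lc_mul (f x) (f y)) &
      (forall x, f (lc_star x) = lc_star (f x))].

(* The star of an element of I is (provably) in I; the fallback
   branch is never used for a closed two-sided ideal of a locally C*-algebra. *)
Section Sub.
Variables (R : realType) (A : lcdata R) (I : set (lc_car A)).
Hypothesis HI : closed_ideal I.
Local Notation S := {x : lc_car A | I x}.

Let HI0 : I (lc_zero A). Proof. by case: HI => -[]. Qed.
Let HIadd x y : I x -> I y -> I (lc_add x y). Proof. by case: HI => -[_ H _] _ _ _; apply: H. Qed.
Let HIscale a x : I x -> I (lc_scale a x). Proof. by case: HI => -[_ _ H] _ _ _; apply: H. Qed.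
Let HImul x y : I x -> I (lc_mul x y). Proof. by case: HI => _ _ H _; apply: H. Qed.

Definition sub_opp (x : S) : S :=
  match pselect (I (lc_opp (sval x))) with
  | left h => exist _ _ h | right _ => x end.
Definition sub_star (x : S) : S :=
  match pselect (I (lc_star (sval x))) with
  | left h => exist _ _ h | right _ => x end.

Definition sub_lc : lcdata R :=
  LCData S (lc_idx A)
    (exist _ (lc_zero A) HI0)
    (fun x y => exist _ _ (HIadd (svalP x) (svalP y)))
    sub_opp
    (fun a x => exist _ _ (HIscale a (svalP x)))
    (fun x y => exist _ _ (HImul (sval y) (svalP x)))
    sub_star
    (fun i x => lc_sn A i (sval x)).
End Sub.

(* The quotient A/I: carrier = cosets x + I, operations through
   representatives, quotient seminorms q_i(x + I) = inf_{y in x + I} p_i(y). *)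
Section Quot.
Variables (R : realType) (A : lcdata R) (I : set (lc_car A)).
Local Notation T := (lc_car A).

Definition coset (x : T) : set T := [set y | I (lc_add y (lc_opp x))].
Definition quot_car := {C : set T | exists x, C = coset x}.
Definition qclass (x : T) : quot_car := exist _ (coset x) (ex_intro _ x erefl).
Definition qrep (C : quot_car) : T := projT1 (cid (svalP C)).

Definition quot_lc : lcdata R :=
  LCData quot_car (lc_idx A)
    (qclass (lc_zero A))
    (fun C D => qclass (lc_add (qrep C) (qrep D)))
    (fun C => qclass (lc_opp (qrep C)))
    (fun a C => qclass (lc_scale a (qrep C)))
    (fun C D => qclass (lc_mul (qrep C) (qrep D)))
    (fun C => qclass (lc_star (qrep C)))
    (fun i C => inf [set lc_sn A i y | y in sval C]).
End Quot.

Definition prod_lc (R : realType) (A B : lcdata R) : lcdata R :=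
  LCData (lc_car A * lc_car B)%type (lc_idx A + lc_idx B)%type
    (lc_zero A, lc_zero B)
    (fun x y => (lc_add x.1 y.1, lc_add x.2 y.2))
    (fun x => (lc_opp x.1, lc_opp x.2))
    (fun a x => (lc_scale a x.1, lc_scale a x.2))
    (fun x y => (lc_mul x.1 y.1, lc_mul x.2 y.2))
    (fun x => (lc_star x.1, lc_star x.2))
    (fun k x => match k with inl i => lc_sn A i x.1 | inr j => lc_sn B j x.2 end).

(** Let [J] be the annihilator [lan I], which equals [ran I] because a locally
    C*-algebra is semiprime.  Then [I J = J I = 0], [I :&: J = 0], both are
    closed *-ideals, and the C*-identity gives [p a <= p (a + b)] for [a] in
    [I] and [b] in [J].  That estimate makes the [I]-component of a net in
    [I + J] Cauchy, so [I + J] is closed by completeness; its left annihilator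
    is [0], hence [I + J = A] by the annihilator property.  The projection onto
    [I] along [J] is then a seminorm-contracting *-homomorphism, and the
    quotient seminorms identify [A/I] isometrically with [J].  Finally a
    closed one-sided ideal [L] of [I] lifts to the closed one-sided ideal
    [L + J] of [A], which transfers the annihilator property to [I]; applied
    to the closed ideal [J] instead of [I], it also covers [J ~ A/I]. *)
From HB Require Import structures.
From mathcomp Require Import all_boot all_order all_algebra.
From mathcomp Require Import complex.
From mathcomp Require Import boolp classical_sets reals filter.
From mathcomp Require Import lra.
Set Implicit Arguments. Unset Strict Implicit. Unset Printing Implicit Defensive.
Import Order.TTheory GRing.Theory Num.Theory.
Local Open Scope ring_scope.
Local Open Scope classical_set_scope.

Local Notation In := Stdlib.Lists.List.In.

Local Ltac exact_conjunct h :=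
  first [exact: h | let a := fresh in let b := fresh in
                    case: (h) => a b; first [exact: a | exact_conjunct b]].

Section Transport.
Variables (R : realType) (B C : lcdata R).
Variables (phi : lc_car B -> lc_car C) (psi : lc_car C -> lc_car B).
Variables (kap : lc_idx C -> lc_idx B) (kap' : lc_idx B -> lc_idx C).
Hypotheses (phiK : cancel phi psi) (psiK : cancel psi phi).
Hypothesis phi0 : phi (lc_zero B) = lc_zero C.
Hypothesis phiD : forall x y, phi (lc_add x y) = lc_add (phi x) (phi y).
Hypothesis phiN : forall x, phi (lc_opp x) = lc_opp (phi x).
Hypothesis phiZ : forall a x, phi (lc_scale a x) = lc_scale a (phi x).
Hypothesis phiM : forall x y, phi (lc_mul x y) = lc_mul (phi x) (phi y).
Hypothesis phiS : forall x, phi (lc_star x) = lc_star (phi x).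
Hypothesis sn_phi : forall i x, lc_sn C i (phi x) = lc_sn B (kap i) x.
Hypothesis sn_phi' : forall j x, lc_sn B j x = lc_sn C (kap' j) (phi x).

Let psi_inj : injective psi. Proof. exact: can_inj psiK. Qed.
Let phi_inj : injective phi. Proof. exact: can_inj phiK. Qed.
Let psi0 : psi (lc_zero C) = lc_zero B. Proof. by rewrite -phi0 phiK. Qed.
Let psiD c d : psi (lc_add c d) = lc_add (psi c) (psi d).
Proof. by rewrite -{1}(psiK c) -{1}(psiK d) -phiD phiK. Qed.
Let psiN c : psi (lc_opp c) = lc_opp (psi c).
Proof. by rewrite -{1}(psiK c) -phiN phiK. Qed.
Let psiZ a c : psi (lc_scale a c) = lc_scale a (psi c).
Proof. by rewrite -{1}(psiK c) -phiZ phiK. Qed.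
Let psiM c d : psi (lc_mul c d) = lc_mul (psi c) (psi d).
Proof. by rewrite -{1}(psiK c) -{1}(psiK d) -phiM phiK. Qed.
Let psiS c : psi (lc_star c) = lc_star (psi c).
Proof. by rewrite -{1}(psiK c) -phiS phiK. Qed.
Let sn_psi i c : lc_sn C i c = lc_sn B (kap i) (psi c).
Proof. by rewrite -sn_phi psiK. Qed.

Lemma transport_star_algebra : is_star_algebra B -> is_star_algebra C.
Proof.
move=> hB; repeat split=> *; apply: psi_inj; rewrite ?(psiD, psiN, psiZ, psiM, psiS, psi0).
all: exact_conjunct hB.
Qed.

Lemma transport_Cstar_seminorm :
  (forall j, is_Cstar_seminorm (lc_sn B j)) -> forall i, is_Cstar_seminorm (lc_sn C i).
Proof.
move=> hB i; case: (hB (kap i)) => q1 q2 q3 q4.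
by split=> *; rewrite !sn_psi ?(psiD, psiZ, psiM, psiS); [exact: q1|exact: q2|exact: q3|exact: q4].
Qed.

Lemma transport_hausdorff : lc_hausdorff B -> lc_hausdorff C.
Proof.
move=> hB c c0; apply: psi_inj; rewrite psi0; apply: hB => j.
by rewrite sn_phi' psiK c0.
Qed.

Lemma transport_complete : lc_complete B -> lc_complete C.
Proof.
move=> hB F FF cauchyF.
have [b0 Fb0] : exists b0, forall j e, 0 < e ->
    (psi @ F) [set y | lc_sn B j (lc_add y (lc_opp b0)) < e].
  apply: hB => j e e0; have [S [FS hS]] := cauchyF (kap' j) e e0.
  exists (psi @` S); split.
    by change (F (psi @^-1` (psi @` S))); apply: filterS FS => u Su; exists u.
  move=> _ _ [u Su <-] [v Sv <-].
  by rewrite -psiN -psiD sn_phi' psiK; apply: hS.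
exists (phi b0) => i e e0.
have Fb0i : F (psi @^-1` [set y | lc_sn B (kap i) (lc_add y (lc_opp b0)) < e]).
  exact: Fb0.
apply: filterS Fb0i => u /=.
by rewrite sn_psi psiD psiN phiK.
Qed.

Let preim_closed (L : set (lc_car C)) : lc_closed L -> lc_closed (phi @^-1` L).
Proof.
move=> cL x nLx; have [F [e [e0 ballL]]] := cL (phi x) nLx.
exists (List.map kap F), e; split=> // y yx; apply: ballL => i iF.
by rewrite -phiN -phiD sn_phi; apply: yx; apply: List.in_map.
Qed.

Let preim_subspace (L : set (lc_car C)) : is_subspace L -> is_subspace (phi @^-1` L).
Proof.
case=> L0 LD LZ; split=> /=; first by rewrite phi0.
  by move=> x y Lx Ly; rewrite /= phiD; apply: LD.
by move=> a x Lx; rewrite /= phiZ; apply: LZ.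
Qed.

Let preim_eq0 (S : set (lc_car B)) (S' : set (lc_car C)) :
  S = phi @^-1` S' -> (S = [set lc_zero B] <-> S' = [set lc_zero C]).
Proof.
move=> ->; split=> e; apply/seteqP; split.
- move=> c S'c; have : (phi @^-1` S') (psi c) by rewrite /= psiK.
  by rewrite e /= => h; rewrite -(psiK c) h phi0.
- move=> c /= ->; rewrite -phi0.
  by have : (phi @^-1` S') (lc_zero B) by rewrite e.
- by move=> x; rewrite /= e /= -phi0 => /phi_inj.
- by move=> x /= ->; rewrite e /= phi0.
Qed.

Let preim_setT (L : set (lc_car C)) : phi @^-1` L = setT <-> L = setT.
Proof.
split=> e; apply/seteqP; split=> // c _; last by rewrite /= e.
by rewrite -[c]psiK; have : (phi @^-1` L) (psi c) by rewrite e.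
Qed.

Let preim_ran (L : set (lc_car C)) : ran (phi @^-1` L) = phi @^-1` ran L.
Proof.
apply/seteqP; split=> x /= h.
  by move=> t Lt; rewrite -[t]psiK -phiM h /= ?psiK // phi0.
by move=> s Ls; apply: phi_inj; rewrite phiM phi0; apply: h.
Qed.

Let preim_lan (L : set (lc_car C)) : lan (phi @^-1` L) = phi @^-1` lan L.
Proof.
apply/seteqP; split=> x /= h.
  by move=> t Lt; rewrite -[t]psiK -phiM h /= ?psiK // phi0.
by move=> s Ls; apply: phi_inj; rewrite phiM phi0; apply: h.
Qed.

Lemma transport_annihilator : annihilator B -> annihilator C.
Proof.
move=> [annl annr]; split=> L [sL mL cL].
- have cL' : closed_left_ideal (phi @^-1` L).
    split; [exact: preim_subspace | | exact: preim_closed].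
    by move=> a x Lx; rewrite /= phiM; apply: mL.
  by rewrite -preim_setT -(annl _ cL'); apply: iff_sym; apply: preim_eq0; apply: preim_ran.
- have cL' : closed_right_ideal (phi @^-1` L).
    split; [exact: preim_subspace | | exact: preim_closed].
    by move=> a x Lx; rewrite /= phiM; apply: mL.
  by rewrite -preim_setT -(annr _ cL'); apply: iff_sym; apply: preim_eq0; apply: preim_lan.
Qed.

Lemma transport_annihilator_locally_Cstar :
  annihilator_locally_Cstar B -> annihilator_locally_Cstar C.
Proof.
case=> -[h1 h2 h3 h4] h5; split; last exact: transport_annihilator.
split; [exact: transport_star_algebra | exact: transport_Cstar_seminorm
       | exact: transport_hausdorff | exact: transport_complete].
Qed.

End Transport.

Lemma lc_continuous_by_seminorms (R : realType) (B C : lcdata R)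
    (f : lc_car B -> lc_car C) (c : R) : 0 < c ->
  (forall i, exists L : seq (lc_idx B), forall x y (e : R), 0 < e ->
     (forall j, In j L -> lc_sn B j (lc_add y (lc_opp x)) < e) ->
     lc_sn C i (lc_add (f y) (lc_opp (f x))) < c * e) ->
  lc_continuous f.
Proof.
move=> c0 /choice[L hL] U oU x Ux.
have [F [e [e0 ballU]]] := oU (f x) Ux.
exists (List.flat_map L F), (e / c); split; first by rewrite divr_gt0.
move=> y yx; apply: ballU => i iF.
have -> : e = c * (e / c) by rewrite mulrC divfK ?lt0r_neq0.
apply: hL; first by rewrite divr_gt0.
by move=> j jL; apply: yx; apply/List.in_flat_map; exists i.
Qed.

Section LocallyCstar.
Variables (R : realType) (A : lcdata R).
Hypothesis hs : is_star_algebra A.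
Local Notation T := (lc_car A).
Local Notation "x ** y" := (lc_mul x y) (at level 40, left associativity).
Local Notation "x ^#" := (lc_star x) (at level 2).

Local Ltac star_axiom := exact_conjunct hs.

Let lc_addA : associative (@lc_add _ A). Proof. star_axiom. Qed.
Let lc_addC : commutative (@lc_add _ A). Proof. star_axiom. Qed.
Let lc_add0 : left_id (lc_zero A) (@lc_add _ A). Proof. star_axiom. Qed.
Let lc_addN : left_inverse (lc_zero A) (@lc_opp _ A) (@lc_add _ A).
Proof. star_axiom. Qed.
HB.instance Definition _ := gen_eqMixin T.
HB.instance Definition _ := gen_choiceMixin T.
HB.instance Definition _ := GRing.isZmodule.Build T lc_addA lc_addC lc_add0 lc_addN.

Let lc_scaleA (a b : R[i]) (v : T) : lc_scale a (lc_scale b v) = lc_scale (a * b) v.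
Proof. symmetry; star_axiom. Qed.
Let lc_scale1 (v : T) : lc_scale 1 v = v.
Proof. star_axiom. Qed.
Let lc_scaleDr (a : R[i]) (x y : T) :
  lc_scale a (lc_add x y) = lc_add (lc_scale a x) (lc_scale a y).
Proof. star_axiom. Qed.
Let lc_scaleDl (v : T) (a b : R[i]) :
  lc_scale (a + b) v = lc_add (lc_scale a v) (lc_scale b v).
Proof. star_axiom. Qed.
HB.instance Definition _ :=
  GRing.Zmodule_isLmodule.Build R[i] T lc_scaleA lc_scale1 lc_scaleDr lc_scaleDl.

Lemma lc_mulA (x y z : T) : x ** (y ** z) = x ** y ** z.
Proof. star_axiom. Qed.
Lemma lc_mulDr (x y z : T) : x ** (y + z) = x ** y + x ** z.
Proof. star_axiom. Qed.
Lemma lc_mulDl (x y z : T) : (x + y) ** z = x ** z + y ** z.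
Proof. star_axiom. Qed.
Lemma lc_scalerAl (a : R[i]) (x y : T) : a *: (x ** y) = (a *: x) ** y.
Proof. star_axiom. Qed.
Lemma lc_starD (x y : T) : (x + y)^# = x^# + y^#.
Proof. star_axiom. Qed.
Lemma lc_starM (x y : T) : (x ** y)^# = y^# ** x^#.
Proof. star_axiom. Qed.
Lemma lc_starK (x : T) : x^#^# = x.
Proof. star_axiom. Qed.

Lemma lc_mul0r (x : T) : 0 ** x = 0.
Proof. by apply: (@addrI _ (0 ** x)); rewrite -lc_mulDl !addr0. Qed.
Lemma lc_mulr0 (x : T) : x ** 0 = 0.
Proof. by apply: (@addrI _ (x ** 0)); rewrite -lc_mulDr !addr0. Qed.
Lemma lc_mulBl (x y z : T) : (x - y) ** z = x ** z - y ** z.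
Proof. by apply: (addIr (y ** z)); rewrite -lc_mulDl !subrK. Qed.
Lemma lc_mulBr (x y z : T) : x ** (y - z) = x ** y - x ** z.
Proof. by apply: (addIr (x ** z)); rewrite -lc_mulDr !subrK. Qed.
Lemma lc_star_inj : injective (@lc_star _ A). Proof. exact: can_inj lc_starK. Qed.
Lemma lc_star0 : (0 : T)^# = 0.
Proof. by apply: (@addrI _ (0^#)); rewrite -lc_starD !addr0. Qed.
Lemma lc_starB (x y : T) : (x - y)^# = x^# - y^#.
Proof. by apply: (addIr y^#); rewrite -lc_starD !subrK. Qed.

Hypothesis hp : forall i, is_Cstar_seminorm (lc_sn A i).
Local Notation p := (lc_sn A).

Lemma lc_snD i (x y : T) : p i (x + y) <= p i x + p i y.
Proof. by case: (hp i) => + _ _ _; apply. Qed.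
Lemma lc_snZ i a (x : T) : p i (a *: x) = cnorm a * p i x.
Proof. by case: (hp i) => _ + _ _; apply. Qed.
Lemma lc_snM i (x y : T) : p i (x ** y) <= p i x * p i y.
Proof. by case: (hp i) => _ _ + _; apply. Qed.
Lemma lc_sn_Cstar i (x : T) : p i (x^# ** x) = p i x ^+ 2.
Proof. by case: (hp i) => _ _ _ +; apply. Qed.

Lemma lc_sn0 i : p i (0 : T) = 0.
Proof. by rewrite -(scale0r (0 : T)) lc_snZ Normc.normc0 mul0r. Qed.
Lemma lc_snN i (x : T) : p i (- x) = p i x.
Proof. by rewrite -scaleN1r lc_snZ normcN Normc.normc1 mul1r. Qed.
Lemma lc_snB i (x y : T) : p i (x - y) <= p i x + p i y.
Proof. by rewrite -(lc_snN i y); apply: lc_snD. Qed.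
Lemma lc_sn_ge0 i (x : T) : 0 <= p i x.
Proof. by have := lc_snB i x x; rewrite subrr lc_sn0 -mulr2n pmulrn_lge0. Qed.

Definition lc_adherent (S : set T) (x : T) : Prop :=
  forall F e, 0 < e -> exists2 y, S y & lc_ball x F e y.

Lemma lc_closedP (S : set T) : lc_closed S <-> forall x, lc_adherent S x -> S x.
Proof.
split=> [cS x adhx | adhS x nSx].
  apply: contrapT => /cS[F [e [e0 ballS]]].
  by have [y Sy /ballS] := adhx F e e0.
apply: contrapT => nball; apply: nSx; apply: adhS => F e e0.
apply: contrapT => nS; apply: nball; exists F, e; split=> // y yx Sy.
by apply: nS; exists y.
Qed.

Lemma lc_closed_bigcap (K : Type) (D : set K) (S : K -> set T) :
  (forall k, D k -> lc_closed (S k)) -> lc_closed (\bigcap_(k in D) S k).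
Proof.
move=> cS; apply/lc_closedP => x adhx k Dk; apply: (lc_closedP _).1 (cS k Dk) _ _.
by move=> F e e0; have [y Sy yx] := adhx F e e0; exists y => //; apply: Sy.
Qed.

Hypothesis hH : lc_hausdorff A.

Lemma lc_closed_kernel (f : T -> T) (c : lc_idx A -> R) :
  (forall x y, f (x - y) = f x - f y) -> (forall i x, p i (f x) <= c i * p i x) ->
  lc_closed [set x | f x = 0].
Proof.
move=> fB fc; apply/lc_closedP => x adhx; apply: hH => i.
apply/eqP; rewrite eq_le lc_sn_ge0 andbT; apply/ler_addgt0Pl => e e0; rewrite addr0.
have c1 : 0 < `|c i| + 1 by rewrite ltr_wpDl.
have [y /= fy0 yx] := adhx [:: i] (e / (`|c i| + 1)) (divr_gt0 e0 c1).
have : p i (y - x) * (`|c i| + 1) < e by rewrite -ltr_pdivlMr //; apply: yx; left.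
have -> : f x = - f (y - x) by rewrite fB fy0 sub0r opprK.
rewrite lc_snN => yxe; apply: le_trans (fc i _) _.
have := lc_sn_ge0 i (y - x); have := ler_norm (c i); nra.
Qed.

Lemma lan_closed (S : set T) : lc_closed (lan S).
Proof.
have -> : lan S = \bigcap_(s in S) [set x | x ** s = 0] by [].
apply: lc_closed_bigcap => s _.
apply: (lc_closed_kernel (f := fun x => x ** s) (c := fun i => p i s)).
  by move=> x y; exact: lc_mulBl.
by move=> i x; rewrite mulrC; exact: lc_snM.
Qed.

Lemma lc_Cstar_eq0 (x : T) : x^# ** x = 0 -> x = 0.
Proof.
move=> xx0; apply: hH => i; have := lc_sn_Cstar i x.
by rewrite xx0 lc_sn0 => /esym/eqP; rewrite expf_eq0 => /eqP.
Qed.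

Lemma lc_semiprime (x : T) : (forall a, x ** a ** x = 0) -> x = 0.
Proof.
move=> xax; do 2!apply: lc_Cstar_eq0.
by rewrite lc_starM lc_starK -lc_mulA [x ** (x^# ** x)]lc_mulA xax lc_mulr0.
Qed.

Lemma lc_filter_ball (G : set_system T) (x : T) : Filter G ->
  (forall i e, 0 < e -> G [set y | p i (y - x) < e]) ->
  forall F e, 0 < e -> G (lc_ball x F e).
Proof.
move=> FG Gx; elim=> [|i F IH] e e0; first by apply: filterS filterT => y _ j [].
apply: filterS (filterI (Gx i e e0) (IH e e0)) => y [yi yF] j [<-|jF] //.
exact: yF.
Qed.

Section Subspace.
Variable S : set T.
Hypothesis sS : is_subspace S.
Lemma subspace0 : S 0. Proof. by case: sS. Qed.
Lemma subspaceD x y : S x -> S y -> S (x + y). Proof. by case: sS => _ + _; apply. Qed.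
Lemma subspaceZ a x : S x -> S (a *: x). Proof. by case: sS => _ _; apply. Qed.
Lemma subspaceN x : S x -> S (- x). Proof. by rewrite -scaleN1r; apply: subspaceZ. Qed.
Lemma subspaceB x y : S x -> S y -> S (x - y).
Proof. by move=> Sx Sy; apply: subspaceD => //; apply: subspaceN. Qed.
End Subspace.

Definition sumset (S1 S2 : set T) : set T := [set a + b | a in S1 & b in S2].

Lemma sumset_subspace (S1 S2 : set T) :
  is_subspace S1 -> is_subspace S2 -> is_subspace (sumset S1 S2).
Proof.
move=> [S1_0 S1D S1Z] [S2_0 S2D S2Z]; split.
- by exists 0 => //; exists 0; rewrite ?addr0.
- move=> _ _ [a S1a [b S2b <-]] [a' S1a' [b' S2b' <-]].
  by exists (a + a'); [exact: S1D | exists (b + b'); [exact: S2D | rewrite addrACA]].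
- move=> c _ [a S1a [b S2b <-]].
  by exists (c *: a); [exact: S1Z | exists (c *: b); [exact: S2Z | exact: (esym (scalerDr _ _ _))]].
Qed.

Hypothesis hC : lc_complete A.

Section ClosedSum.
Variables S1 S2 : set T.
Hypotheses (sS1 : is_subspace S1) (sS2 : is_subspace S2).
Hypotheses (cS1 : lc_closed S1) (cS2 : lc_closed S2).
Hypothesis sn_le_sum : forall a b i, S1 a -> S2 b -> p i a <= p i (a + b).

Section Adherent.
Variable x : T.
Hypothesis adhx : lc_adherent (sumset S1 S2) x.

Let first_comp (k : seq (lc_idx A) * R) : set T :=
  [set a | S1 a /\ exists2 b, S2 b & lc_ball x k.1 k.2 (a + b)].
Let G := filter_from [set k | 0 < k.2] first_comp.

Let G_filter : ProperFilter G.
Proof.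
apply: filter_from_proper; last first.
  by move=> k k0; have [_ [a S1a [b S2b <-]] ab] := adhx k.1 k0; exists a; split=> //; exists b.
apply: filter_from_filter; first by exists ([::], 1) => /=.
move=> k k' /= k0 k'0; exists (k.1 ++ k'.1, Num.min k.2 k'.2); first by rewrite /= lt_min k0.
move=> a [S1a [b S2b ab]]; split; split=> //; exists b => // i iF.
  by have := ab i (List.in_or_app _ _ _ (or_introl iF)); rewrite lt_min => /andP[].
by have := ab i (List.in_or_app _ _ _ (or_intror iF)); rewrite lt_min => /andP[].
Qed.

Let G_cauchy i e : 0 < e -> exists B, G B /\ forall a a', B a -> B a' -> p i (a - a') < e.
Proof.
move=> e0; exists (first_comp ([:: i], e / 2)); split.
  by exists ([:: i], e / 2) => //=; rewrite divr_gt0.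
move=> a a' [S1a [b S2b ab]] [S1a' [b' S2b' ab']].
have {}ab := ab i (or_introl erefl); have {}ab' := ab' i (or_introl erefl).
apply: le_lt_trans (sn_le_sum i (subspaceB sS1 S1a S1a') (subspaceB sS2 S2b S2b')) _.
have -> : a - a' + (b - b') = (a + b - x) - (a' + b' - x).
  by rewrite [in RHS]opprB [RHS]addrA subrK opprD addrACA.
by apply: le_lt_trans (lc_snB _ _ _) _; rewrite /= in ab ab'; lra.
Qed.

Lemma sumset_adherent : sumset S1 S2 x.
Proof.
have Gproper := G_filter; have [a0 Ga0] := hC Gproper G_cauchy.
have S1a0 : S1 a0.
  apply: (lc_closedP S1).1 cS1 _ _ => F e e0.
  have /filter_ex[y [ya0 [S1y _]]] : G (lc_ball a0 F e `&` first_comp ([::], 1)).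
    by apply: filterI; [exact: lc_filter_ball | exists ([::], 1) => /=].
  by exists y.
have S2xa0 : S2 (x - a0).
  apply: (lc_closedP S2).1 cS2 _ _ => F e e0; have e2 : 0 < e / 2 by rewrite divr_gt0.
  have /filter_ex[y [ya0 [_ [b S2b ybx]]]] : G (lc_ball a0 F (e / 2) `&` first_comp (F, e / 2)).
    by apply: filterI; [exact: lc_filter_ball | exists (F, e / 2)].
  exists b => // i iF; change (p i (b - (x - a0)) < e).
  have ya0i : p i (y - a0) < e / 2 := ya0 i iF.
  have ybxi : p i (y + b - x) < e / 2 := ybx i iF.
  have -> : b - (x - a0) = (y + b - x) - (y - a0).
    by rewrite -[y + b - x]addrA [y + (_ - _)]addrC addrKA opprB opprK addrA addrAC.
  by apply: le_lt_trans (lc_snB _ _ _) _; lra.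
by exists a0 => //; exists (x - a0); rewrite // addrC subrK.
Qed.

End Adherent.

Lemma lc_closed_sumset : lc_closed (sumset S1 S2).
Proof. by apply/lc_closedP => x; exact: sumset_adherent. Qed.

End ClosedSum.

Lemma lan_subspace (S : set T) : is_subspace (lan S).
Proof.
split=> [s _ | x y xS yS s Ss | a x xS s Ss]; first exact: lc_mul0r.
  by rewrite lc_mulDl xS // yS // addr0.
by rewrite -lc_scalerAl xS // scaler0.
Qed.

(** The C*-identity turns orthogonality of [a] and [b] into [p (a + b)^2 = p (h + k)] with
    [h k] hermitian and [h k = 0], and [p h^2 = p (h (h + k)) <= p h p (h + k)]. *)
Lemma lc_sn_le_orthogonal_sum i (a b : T) : a^# ** b = 0 -> b^# ** a = 0 ->
  (a^# ** a) ** (b^# ** b) = 0 -> p i a <= p i (a + b).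
Proof.
move=> ab ba hk; set h := a^# ** a; set k := b^# ** b.
have hh : h^# = h by rewrite /h lc_starM lc_starK.
have ab2 : (a + b)^# ** (a + b) = h + k.
  by rewrite lc_starD lc_mulDl !lc_mulDr ab ba addr0 add0r.
have hhk : p i h <= p i (h + k).
  have := lc_snM i h (h + k); rewrite lc_mulDr hk addr0 -{1}hh lc_sn_Cstar expr2.
  by have := lc_sn_ge0 i h; have := lc_sn_ge0 i (h + k); nra.
move: hhk; rewrite -ab2 !lc_sn_Cstar => a2.
by have := lc_sn_ge0 i a; have := lc_sn_ge0 i (a + b); nra.
Qed.

Hypothesis hann : annihilator A.

Section ClosedIdeal.
Variable I : set T.
Hypothesis HI : closed_ideal I.
Local Notation J := (lan I).

Lemma closed_ideal_subspace : is_subspace I. Proof. by case: HI. Qed.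
Lemma closed_idealMl a x : I x -> I (a ** x). Proof. by case: HI => _ + _ _; apply. Qed.
Lemma closed_idealMr a x : I x -> I (x ** a). Proof. by case: HI => _ _ + _; apply. Qed.
Lemma closed_ideal_closed : lc_closed I. Proof. by case: HI. Qed.
Local Notation sI := closed_ideal_subspace.

Lemma lan_ideal_ran : lan I = ran I.
Proof.
apply/seteqP; split=> x xI s Is; apply: lc_semiprime => a.
  rewrite -!lc_mulA [a ** (s ** x)]lc_mulA [x ** (a ** s ** x)]lc_mulA.
  by rewrite xI ?lc_mul0r ?lc_mulr0 //; apply: closed_idealMl.
rewrite -!lc_mulA [a ** (x ** s)]lc_mulA [s ** (a ** x ** s)]lc_mulA [s ** (a ** x)]lc_mulA.
by rewrite xI ?lc_mul0r ?lc_mulr0 //; apply: closed_idealMr.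
Qed.

Lemma lan_idealMl a x : J x -> J (a ** x).
Proof.
by rewrite lan_ideal_ran => xI s Is; rewrite lc_mulA xI //; apply: closed_idealMr.
Qed.
Lemma lan_idealMr a x : J x -> J (x ** a).
Proof. by move=> xI s Is; rewrite -lc_mulA xI //; apply: closed_idealMl. Qed.

Lemma lan_closed_ideal : closed_ideal J.
Proof.
split; [exact: lan_subspace | exact: lan_idealMl | exact: lan_idealMr | exact: lan_closed].
Qed.

Lemma lan_ideal_star x : J x -> J x^#.
Proof.
move=> Jx s Is; apply: lc_star_inj; rewrite lc_star0; apply: lc_Cstar_eq0.
rewrite lc_starK lc_starM lc_starK -lc_mulA [s ** _]lc_mulA.
move: Jx; rewrite lan_ideal_ran => ->; first exact: lc_mulr0.
exact: closed_idealMr.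
Qed.

Lemma ideal_lanI_eq0 x : I x -> J x -> x = 0.
Proof.
by move=> Ix Jx; apply: lc_semiprime => a; rewrite -lc_mulA Jx //; apply: closed_idealMl.
Qed.

Lemma ideal_lan_mul a b : I a -> J b -> a ** b = 0.
Proof. by rewrite lan_ideal_ran => Ia; apply. Qed.
Lemma lan_ideal_mul a b : I a -> J b -> b ** a = 0.
Proof. by move=> Ia; apply. Qed.

Lemma ideal_lan_orthogonal a b : I a -> J b ->
  [/\ a ** b^# = 0, b^# ** a = 0, a^# ** b = 0 & b ** a^# = 0].
Proof.
move=> Ia /lan_ideal_star Jb.
have ab : a ** b^# = 0 := ideal_lan_mul Ia Jb.
have ba : b^# ** a = 0 := lan_ideal_mul Ia Jb.
split=> //; apply: lc_star_inj; by rewrite lc_starM lc_starK ?ab ?ba lc_star0.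
Qed.

Lemma sn_ideal_le_sum a b i : I a -> J b -> p i a <= p i (a + b).
Proof.
move=> Ia Jb; have [ab ba a'b _] := ideal_lan_orthogonal Ia Jb.
apply: lc_sn_le_orthogonal_sum => //.
by rewrite -lc_mulA [a ** _]lc_mulA ab lc_mul0r lc_mulr0.
Qed.

Lemma sn_lan_le_sum a b i : I a -> J b -> p i b <= p i (a + b).
Proof.
move=> Ia Jb; have [_ ba a'b ba'] := ideal_lan_orthogonal Ia Jb.
rewrite addrC; apply: lc_sn_le_orthogonal_sum => //.
by rewrite -lc_mulA [b ** _]lc_mulA ba' lc_mul0r lc_mulr0.
Qed.

(** [I + J] is a closed right ideal with zero left annihilator. *)
Lemma ideal_lan_sumset : sumset I J = setT.
Proof.
have KJ : closed_right_ideal (sumset I J).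
  split; first exact: sumset_subspace sI (lan_subspace _).
    move=> c _ [a Ia [b Jb <-]]; exists (a ** c); first exact: closed_idealMr.
    by exists (b ** c); [exact: lan_idealMr | rewrite lc_mulDl].
  apply: lc_closed_sumset; [exact: sI | exact: lan_subspace | exact: closed_ideal_closed
                           | exact: lan_closed | exact: sn_ideal_le_sum].
apply/(hann.2 _ KJ).1/seteqP; split=> [y yK | y ->]; last by move=> s _; apply: lc_mul0r.
have J0 : J 0 := subspace0 (lan_subspace I).
have Jy : J y by move=> s Is; apply: yK; exists s => //; exists 0; rewrite ?addr0.
apply: lc_semiprime => a; rewrite -lc_mulA; apply: yK.
by exists 0; [exact: subspace0 sI | exists (a ** y); [exact: lan_idealMl | rewrite add0r]].
Qed.

Lemma ideal_lan_decomp x : exists a, I a /\ J (x - a).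
Proof.
have : sumset I J x by rewrite ideal_lan_sumset.
by case=> a Ia [b Jb <-]; exists a; rewrite addrC addKr.
Qed.

Lemma closed_ideal_star x : I x -> I x^#.
Proof.
move=> Ix; have [a [Ia Jxa]] := ideal_lan_decomp x^#.
suff xa0 : x^# - a = 0 by move/eqP: xa0; rewrite subr_eq0 => /eqP ->.
apply: lc_semiprime => c; rewrite -lc_mulA lc_mulBl.
have Jcxa : J (c ** (x^# - a)) by apply: lan_idealMl.
have [_ _ -> _] := ideal_lan_orthogonal Ix Jcxa.
by rewrite (ideal_lan_mul Ia Jcxa) subrr.
Qed.

Lemma ideal_lan_sum_eq0 a b : I a -> J b -> a + b = 0 -> a = 0.
Proof.
move=> Ia Jb /eqP; rewrite addr_eq0 => /eqP ab; apply: ideal_lanI_eq0 => //.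
by rewrite ab; apply: subspaceN (lan_subspace I) _ Jb.
Qed.

Definition prI (x : T) : T := projT1 (cid (ideal_lan_decomp x)).
Definition prJ (x : T) : T := x - prI x.

Lemma prI_ideal x : I (prI x). Proof. by rewrite /prI; case: cid => a []. Qed.
Lemma prJ_lan x : J (prJ x). Proof. by rewrite /prJ /prI; case: cid => a []. Qed.
Lemma prI_add_prJ x : prI x + prJ x = x. Proof. exact: subrKC. Qed.

Lemma prI_sum a b : I a -> J b -> prI (a + b) = a.
Proof.
move=> Ia Jb; apply/eqP; rewrite -subr_eq0; apply/eqP.
apply: (@ideal_lan_sum_eq0 _ (prJ (a + b) - b)).
- exact: (subspaceB sI (prI_ideal _) Ia).
- exact: (subspaceB (lan_subspace I) (prJ_lan _) Jb).
- by rewrite addrACA prI_add_prJ -opprD subrr.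
Qed.

Lemma prI_id a : I a -> prI a = a.
Proof.
by move=> Ia; rewrite -[in LHS](addr0 a) prI_sum //; exact: (subspace0 (lan_subspace I)).
Qed.
Lemma prJ_id b : J b -> prJ b = b.
Proof.
by move=> Jb; rewrite /prJ -[in prI b](add0r b) prI_sum ?subr0 //; exact: (subspace0 sI).
Qed.

Lemma prID x y : prI (x + y) = prI x + prI y.
Proof.
rewrite -[in LHS](prI_add_prJ x) -[in LHS](prI_add_prJ y) addrACA prI_sum //.
  exact: (subspaceD sI (prI_ideal _) (prI_ideal _)).
exact: (subspaceD (lan_subspace I) (prJ_lan _) (prJ_lan _)).
Qed.
Lemma prIZ a x : prI (a *: x) = a *: prI x.
Proof.
rewrite -[in LHS](prI_add_prJ x) scalerDr prI_sum //.
  exact: (subspaceZ sI _ (prI_ideal _)).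
exact: (subspaceZ (lan_subspace I) _ (prJ_lan _)).
Qed.
Lemma prIB x y : prI (x - y) = prI x - prI y.
Proof. by rewrite prID -scaleN1r prIZ scaleN1r. Qed.
Lemma prJB x y : prJ (x - y) = prJ x - prJ y.
Proof. by rewrite /prJ prIB !opprD !opprK addrACA. Qed.
Lemma prJ_eq x y : I (x - y) -> prJ x = prJ y.
Proof. by move=> Ixy; apply/eqP; rewrite -subr_eq0 -prJB /prJ prI_id ?subrr. Qed.

Lemma prIM x y : prI (x ** y) = prI x ** prI y.
Proof.
have -> : x ** y = prI x ** prI y + prJ x ** prJ y.
  rewrite -[in LHS](prI_add_prJ x) -[in LHS](prI_add_prJ y) lc_mulDl.
  rewrite (lc_mulDr (prI x) (prI y)) (lc_mulDr (prJ x) (prI y)).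
  rewrite (ideal_lan_mul (prI_ideal x) (prJ_lan y)).
  by rewrite (lan_ideal_mul (prI_ideal y) (prJ_lan x)) addr0 add0r.
rewrite prI_sum //; first by apply: closed_idealMr; apply: prI_ideal.
by apply: lan_idealMr; apply: prJ_lan.
Qed.
Lemma prI_star x : prI x^# = (prI x)^#.
Proof.
rewrite -[in LHS](prI_add_prJ x) lc_starD prI_sum //.
  by apply: closed_ideal_star; apply: prI_ideal.
by apply: lan_ideal_star; apply: prJ_lan.
Qed.

Lemma sn_prI_le i x : p i (prI x) <= p i x.
Proof.
by rewrite -{2}(prI_add_prJ x); apply: sn_ideal_le_sum; [apply: prI_ideal | apply: prJ_lan].
Qed.
Lemma sn_prJ_le i x : p i (prJ x) <= p i x.
Proof.
by rewrite -{2}(prI_add_prJ x); apply: sn_lan_le_sum; [apply: prI_ideal | apply: prJ_lan].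
Qed.

End ClosedIdeal.

Section SubAlgebra.
Variable I : set T.
Hypothesis HI : closed_ideal I.
Local Notation J := (lan I).
Local Notation SA := (sub_lc HI).
Local Notation sI := (closed_ideal_subspace HI).

Lemma sub_lc_inj (u v : lc_car SA) : sval u = sval v -> u = v.
Proof. by case: u v => x Ix [y Iy] /= xy; apply: eq_exist. Qed.

Definition prI_sub (x : T) : lc_car SA := exist _ (prI HI x) (prI_ideal HI x).

Lemma sub_lc_oppE (u : lc_car SA) : sval (lc_opp u) = - sval u.
Proof.
rewrite /= /sub_opp; case: pselect => // -[].
exact: (subspaceN sI (svalP u)).
Qed.

Lemma sub_lc_starE (u : lc_car SA) : sval (lc_star u) = (sval u)^#.
Proof.
rewrite /= /sub_star; case: pselect => // -[].
exact: (closed_ideal_star HI (svalP u)).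
Qed.

Lemma sub_star_algebra : is_star_algebra SA.
Proof.
repeat split=> *; apply: sub_lc_inj; rewrite /= ?sub_lc_oppE ?sub_lc_starE /=.
all: exact_conjunct hs.
Qed.

Lemma sub_Cstar_seminorm i : is_Cstar_seminorm (lc_sn SA i).
Proof.
by split=> *; rewrite /= ?sub_lc_starE; [exact: lc_snD | exact: lc_snZ | exact: lc_snM
                                       | exact: lc_sn_Cstar].
Qed.

Lemma sub_hausdorff : lc_hausdorff SA.
Proof. by move=> u u0; apply: sub_lc_inj; apply: hH. Qed.

Lemma sub_complete : lc_complete SA.
Proof.
move=> F FF cauchyF; pose v (u : lc_car SA) : T := sval u.
have [a0 Fa0] : exists a0, forall i e, 0 < e -> (v @ F) [set y | p i (y - a0) < e].
  apply: hC => i e e0; have [B [FB hB]] := cauchyF i e e0.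
  exists (v @` B); split.
    by change (F (v @^-1` (v @` B))); apply: filterS FB => u Bu; exists u.
  by move=> _ _ [u Bu <-] [w Bw <-]; have := hB u w Bu Bw; rewrite /= sub_lc_oppE.
have Ia0 : I a0.
  apply: (lc_closedP I).1 (closed_ideal_closed HI) _ _ => G e e0.
  have : F (v @^-1` lc_ball a0 G e) by apply: (lc_filter_ball (G := v @ F)).
  by move=> /filter_ex[u ua0]; exists (v u) => //; apply: svalP.
exists (exist _ a0 Ia0) => i e e0.
have Fa0i : F (v @^-1` [set y | p i (y - a0) < e]) := Fa0 i e e0.
by apply: filterS Fa0i => u /=; rewrite sub_lc_oppE.
Qed.

Lemma sub_ran_setT : ran [set: lc_car SA] = [set lc_zero SA].
Proof.
apply/seteqP; split=> u /=; last by move=> -> s _; apply: sub_lc_inj; exact: lc_mulr0.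
move=> u0; apply: sub_lc_inj; apply: (ideal_lanI_eq0 HI (svalP u)).
rewrite lan_ideal_ran // => s Is.
by have /(congr1 sval) := u0 (exist _ s Is) Logic.I.
Qed.

Lemma sub_lan_setT : lan [set: lc_car SA] = [set lc_zero SA].
Proof.
apply/seteqP; split=> u /=; last by move=> -> s _; apply: sub_lc_inj; exact: lc_mul0r.
move=> u0; apply: sub_lc_inj; apply: (ideal_lanI_eq0 HI (svalP u)) => s Is.
by have /(congr1 sval) := u0 (exist _ s Is) Logic.I.
Qed.

Section Lift.
Variable L : set (lc_car SA).
Local Notation K := (sumset (sval @` L) J).

Lemma lift_subspace : is_subspace L -> is_subspace (sval @` L).
Proof.
case=> L0 LD LZ; split; first by exists (lc_zero SA).
  by move=> _ _ [u Lu <-] [w Lw <-]; exists (lc_add u w) => //; apply: LD.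
by move=> a _ [u Lu <-]; exists (lc_scale a u) => //; apply: LZ.
Qed.

Lemma lift_sumset_closed : lc_closed L -> lc_closed K.
Proof.
move=> cL; apply/lc_closedP => x adhx.
suff LprI : (sval @` L) (prI HI x).
  by exists (prI HI x) => //; exists (prJ HI x); [exact: prJ_lan | exact: prI_add_prJ].
exists (prI_sub x) => //; apply: contrapT => /cL[F [e [e0 ballL]]].
have [_ [_ [u Lu <-] [b Jb <-]] ux] := adhx F e e0.
apply: ballL Lu => i iF /=; rewrite sub_lc_oppE /=.
apply: le_lt_trans (sn_ideal_le_sum (b := b - prJ HI x) HI i _ _) _.
- exact: (subspaceB sI (svalP u) (prI_ideal HI x)).
- exact: (subspaceB (lan_subspace I) Jb (prJ_lan HI x)).
by rewrite addrACA -opprD prI_add_prJ; apply: ux.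
Qed.

Lemma lift_sumset_setT : K = setT -> L = setT.
Proof.
move=> KT; apply/seteqP; split=> // -[x Ix] _.
have : K x by rewrite KT.
case=> _ [u Lu <-] [b Jb ub]; suff -> : exist _ x Ix = u by [].
have Ib : I b.
  have -> : b = x - sval u by rewrite -ub [sval u + b]addrC addrK.
  exact: (subspaceB sI Ix (svalP u)).
by apply: sub_lc_inj; rewrite /= -ub (ideal_lanI_eq0 HI Ib Jb) addr0.
Qed.

Lemma lift_left_ideal : closed_left_ideal L -> closed_left_ideal K.
Proof.
case=> sL mL cL; split; [exact: sumset_subspace (lift_subspace sL) (lan_subspace _)
                        | | exact: lift_sumset_closed].
move=> c _ [_ [u Lu <-] [b Jb <-]].
exists (prI HI c ** sval u); first by exists (lc_mul (prI_sub c) u) => //; apply: mL.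
exists (c ** b); first exact: lan_idealMl.
rewrite lc_mulDr -[in c ** sval u](prI_add_prJ HI c) lc_mulDl.
by rewrite (lan_ideal_mul (svalP u) (prJ_lan HI c)) addr0.
Qed.

Lemma lift_right_ideal : closed_right_ideal L -> closed_right_ideal K.
Proof.
case=> sL mL cL; split; [exact: sumset_subspace (lift_subspace sL) (lan_subspace _)
                        | | exact: lift_sumset_closed].
move=> c _ [_ [u Lu <-] [b Jb <-]].
exists (sval u ** prI HI c); first by exists (lc_mul u (prI_sub c)) => //; apply: mL.
exists (b ** c); first exact: lan_idealMr.
rewrite lc_mulDl -[in sval u ** c](prI_add_prJ HI c) lc_mulDr.
by rewrite (ideal_lan_mul HI (svalP u) (prJ_lan HI c)) addr0.
Qed.

Lemma lift_sumsetJ b : is_subspace L -> J b -> K b.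
Proof.
move=> sL Jb; exists 0; first by exists (lc_zero SA) => //; case: sL.
by exists b; rewrite ?add0r.
Qed.

Lemma lift_sumsetL (u : lc_car SA) : L u -> K (sval u).
Proof.
move=> Lu; exists (sval u); first by exists u.
by exists 0; rewrite ?addr0 //; exact: (subspace0 (lan_subspace _)).
Qed.

(** An annihilator of [K] has no [J]-component, so it lies in [I] and annihilates [L]. *)
Lemma lift_sumset_ran0 : is_subspace L -> ran L = [set lc_zero SA] -> ran K = [set 0].
Proof.
move=> sL ranL; apply/seteqP; split=> z; last by move=> -> s _; apply: lc_mulr0.
move=> Kz; have prJz : prJ HI z = 0.
  apply: lc_semiprime => a; have Jza := lan_idealMr HI a (prJ_lan HI z).
  rewrite {2}/prJ lc_mulBr Kz; last exact: lift_sumsetJ.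
  by rewrite (lan_ideal_mul (prI_ideal HI z) Jza) subrr.
have zI : prI HI z = z by rewrite -[RHS](prI_add_prJ HI) prJz addr0.
have : ran L (prI_sub z).
  by move=> u Lu; apply: sub_lc_inj; rewrite /= zI; apply: Kz; apply: lift_sumsetL.
by rewrite ranL => /(congr1 sval); rewrite /= zI.
Qed.

Lemma lift_sumset_lan0 : is_subspace L -> lan L = [set lc_zero SA] -> lan K = [set 0].
Proof.
move=> sL lanL; apply/seteqP; split=> z; last by move=> -> s _; apply: lc_mul0r.
move=> Kz; have prJz : prJ HI z = 0.
  apply: lc_semiprime => a; have Jaz := lan_idealMl HI a (prJ_lan HI z).
  rewrite -lc_mulA {1}/prJ lc_mulBl Kz; last exact: lift_sumsetJ.
  by rewrite (ideal_lan_mul HI (prI_ideal HI z) Jaz) subrr.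
have zI : prI HI z = z by rewrite -[RHS](prI_add_prJ HI) prJz addr0.
have : lan L (prI_sub z).
  by move=> u Lu; apply: sub_lc_inj; rewrite /= zI; apply: Kz; apply: lift_sumsetL.
by rewrite lanL => /(congr1 sval); rewrite /= zI.
Qed.

End Lift.

Lemma sub_annihilator : annihilator SA.
Proof.
split=> L cL.
- have [sL _ _] := cL; split=> [ranL | ->]; last exact: sub_ran_setT.
  apply: lift_sumset_setT; apply/(hann.1 _ (lift_left_ideal cL)).1.
  exact: lift_sumset_ran0.
- have [sL _ _] := cL; split=> [lanL | ->]; last exact: sub_lan_setT.
  apply: lift_sumset_setT; apply/(hann.2 _ (lift_right_ideal cL)).1.
  exact: lift_sumset_lan0.
Qed.

Lemma sub_annihilator_locally_Cstar : annihilator_locally_Cstar SA.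
Proof.
split; last exact: sub_annihilator.
by split; [exact: sub_star_algebra | exact: sub_Cstar_seminorm | exact: sub_hausdorff
          | exact: sub_complete].
Qed.

End SubAlgebra.

Section Quotient.
Variable I : set T.
Hypothesis HI : closed_ideal I.
Local Notation Q := (quot_lc I).
Local Notation sI := (closed_ideal_subspace HI).

Lemma quot_class_eq x y : I (x - y) -> qclass I x = qclass I y.
Proof.
move=> Ixy; apply: eq_exist; apply/seteqP; split=> w /= Iw.
  change (I (w - y)); rewrite -[w](subrK x) -addrA.
  exact: (subspaceD sI Iw Ixy).
change (I (w - x)); rewrite -[w](subrK y) -addrA -[y - x]opprB.
exact: (subspaceB sI Iw Ixy).
Qed.

Lemma quot_class_inj x y : qclass I x = qclass I y -> I (x - y).
Proof.
move/(congr1 sval) => /= xy.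
have : coset I x x by change (I (x - x)); rewrite subrr; exact: (subspace0 sI).
by rewrite xy.
Qed.

Lemma quot_repK (C : quot_car I) : qclass I (qrep C) = C.
Proof.
case: C => S Sx; apply: eq_exist; rewrite /qrep.
by case: (cid _) => x /= ->.
Qed.

Lemma quot_rep_class x : I (qrep (qclass I x) - x).
Proof. by apply: quot_class_inj; rewrite quot_repK. Qed.

Lemma quot_addE x y : lc_add (qclass I x : lc_car Q) (qclass I y) = qclass I (x + y).
Proof.
apply: quot_class_eq; rewrite opprD addrACA.
exact: (subspaceD sI (quot_rep_class x) (quot_rep_class y)).
Qed.
Lemma quot_oppE x : lc_opp (qclass I x : lc_car Q) = qclass I (- x).
Proof. by apply: quot_class_eq; rewrite -opprD; apply: (subspaceN sI (quot_rep_class x)). Qed.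
Lemma quot_scaleE a x : lc_scale a (qclass I x : lc_car Q) = qclass I (a *: x).
Proof. by apply: quot_class_eq; rewrite -scalerBr; apply: (subspaceZ sI a (quot_rep_class x)). Qed.
Lemma quot_mulE x y : lc_mul (qclass I x : lc_car Q) (qclass I y) = qclass I (x ** y).
Proof.
apply: quot_class_eq; set x' := qrep _; set y' := qrep _.
have -> : x' ** y' - x ** y = (x' - x) ** y' + x ** (y' - y).
  by rewrite lc_mulBl lc_mulBr addrA subrK.
apply: (subspaceD sI); [apply: (closed_idealMr HI) | apply: (closed_idealMl HI)];
  exact: quot_rep_class.
Qed.
Lemma quot_starE x : lc_star (qclass I x : lc_car Q) = qclass I x^#.
Proof.
by apply: quot_class_eq; rewrite -lc_starB; apply: (closed_ideal_star HI); apply: quot_rep_class.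
Qed.

(** The infimum defining the quotient seminorm is attained at [prJ HI x]. *)
Lemma quot_snE i x : lc_sn Q i (qclass I x) = p i (prJ HI x).
Proof.
have cosetJ : coset I x (prJ HI x).
  change (I (prJ HI x - x)); rewrite /prJ addrAC subrr add0r.
  exact: (subspaceN sI (prI_ideal HI x)).
have lbJ : lbound [set p i y | y in coset I x] (p i (prJ HI x)).
  by move=> _ [y xy <-]; rewrite -(prJ_eq HI xy); apply: sn_prJ_le.
apply/eqP; rewrite eq_le; apply/andP; split.
  by apply: ge_inf; [exists (p i (prJ HI x)) | exists (prJ HI x)].
by apply: lb_le_inf => //; exists (p i (prJ HI x)), (prJ HI x).
Qed.

Lemma quot_snB i x y :
  lc_sn Q i (lc_add (qclass I y : lc_car Q) (lc_opp (qclass I x : lc_car Q))) =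
  p i (prJ HI y - prJ HI x).
Proof. by rewrite quot_oppE quot_addE quot_snE prJB. Qed.

Lemma quot_annihilator_locally_Cstar : annihilator_locally_Cstar Q.
Proof.
pose HJ := lan_closed_ideal HI.
pose phi (b : lc_car (sub_lc HJ)) : lc_car Q := qclass I (sval b).
pose psi (C : lc_car Q) : lc_car (sub_lc HJ) := exist _ _ (prJ_lan HI (qrep C)).
have prJ_sub (b : lc_car (sub_lc HJ)) : prJ HI (sval b) = sval b by apply: prJ_id; apply: svalP.
apply: (@transport_annihilator_locally_Cstar _ (sub_lc HJ) Q phi psi id id).
- move=> b; apply: sub_lc_inj => /=; rewrite -[RHS]prJ_sub; apply: prJ_eq.
  exact: quot_rep_class.
- move=> C; rewrite /phi /psi /= -[RHS]quot_repK; apply: quot_class_eq.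
  by rewrite /prJ addrC addKr; apply: (subspaceN sI (prI_ideal HI _)).
- by [].
- by move=> x y; rewrite /phi quot_addE.
- by move=> x; rewrite /phi quot_oppE sub_lc_oppE.
- by move=> a x; rewrite /phi quot_scaleE.
- by move=> x y; rewrite /phi quot_mulE.
- by move=> x; rewrite /phi quot_starE sub_lc_starE.
- by move=> i b; rewrite /phi quot_snE prJ_sub.
- by move=> i b; rewrite /phi quot_snE prJ_sub.
- exact: sub_annihilator_locally_Cstar.
Qed.

Definition ideal_quot_split (x : T) : lc_car (prod_lc (sub_lc HI) Q) :=
  (prI_sub HI x, qclass I x).
Definition ideal_quot_merge (w : lc_car (prod_lc (sub_lc HI) Q)) : T :=
  sval w.1 + prJ HI (qrep w.2).

Lemma ideal_quot_splitK : cancel ideal_quot_split ideal_quot_merge.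
Proof.
by move=> x; rewrite /ideal_quot_merge /= (prJ_eq HI (quot_rep_class x)) prI_add_prJ.
Qed.

Lemma ideal_quot_mergeK : cancel ideal_quot_merge ideal_quot_split.
Proof.
move=> [u C]; rewrite /ideal_quot_split /ideal_quot_merge /=; congr (_, _).
  by apply: sub_lc_inj; rewrite /= prI_sum //; [apply: svalP | apply: prJ_lan].
rewrite -[RHS]quot_repK; apply: quot_class_eq.
rewrite /prJ addrA addrAC addrK.
exact: (subspaceB sI (svalP u) (prI_ideal HI _)).
Qed.

Lemma ideal_quot_split_continuous : lc_continuous ideal_quot_split.
Proof.
apply: (@lc_continuous_by_seminorms _ _ _ _ 1) => // -[] i; exists [:: i] => x y e e0 yx;
  have {}yx : p i (y - x) < e by apply: yx; left.
- rewrite mul1r /= sub_lc_oppE; change (p i (prI HI y - prI HI x) < e).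
  by rewrite -prIB; apply: le_lt_trans (sn_prI_le HI i _) yx.
- change (lc_sn Q i (lc_add (qclass I y : lc_car Q) (lc_opp (qclass I x : lc_car Q))) < 1 * e).
  by rewrite mul1r quot_snB -prJB; apply: le_lt_trans (sn_prJ_le HI i _) yx.
Qed.

Lemma ideal_quot_merge_continuous : lc_continuous ideal_quot_merge.
Proof.
apply: (@lc_continuous_by_seminorms _ _ _ _ 2) => // i.
exists [:: inl i; inr i] => -[u C] [v D] e e0 vu.
have vui : p i (sval v - sval u) < e.
  by have := vu (inl i) (or_introl erefl); rewrite /= sub_lc_oppE.
have DCi : p i (prJ HI (qrep D) - prJ HI (qrep C)) < e.
  have DC : lc_sn Q i (lc_add D (lc_opp C)) < e := vu (inr i) (or_intror (or_introl erefl)).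
  by rewrite -(quot_repK C) -(quot_repK D) quot_snB in DC.
change (p i ((sval v + prJ HI (qrep D)) - (sval u + prJ HI (qrep C))) < 2 * e).
rewrite opprD addrACA.
by apply: le_lt_trans (lc_snD _ _ _) _; lra.
Qed.

Lemma ideal_quot_split_iso : top_star_iso ideal_quot_split.
Proof.
split.
  by exists ideal_quot_merge; split; [exact: ideal_quot_splitK | exact: ideal_quot_mergeK
                                    | exact: ideal_quot_merge_continuous].
split; first exact: ideal_quot_split_continuous.
- by move=> x y; congr (_, _); [apply: sub_lc_inj; exact: prID | rewrite quot_addE].
- by move=> a x; congr (_, _); [apply: sub_lc_inj; exact: prIZ | rewrite quot_scaleE].
- by move=> x y; congr (_, _); [apply: sub_lc_inj; exact: prIM | rewrite quot_mulE].
- by move=> x; congr (_, _); [apply: sub_lc_inj; rewrite sub_lc_starE; exact: prI_star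
                             | rewrite quot_starE].
Qed.

End Quotient.
End LocallyCstar.

Theorem proposition3p26 (R : realType) (A : lcdata R) (I : set (lc_car A))
  (hA : annihilator_locally_Cstar A) (HI : closed_ideal I) :
  annihilator_locally_Cstar (sub_lc HI) /\
  annihilator_locally_Cstar (quot_lc I) /\
  exists f : lc_car A -> lc_car (prod_lc (sub_lc HI) (quot_lc I)), top_star_iso f.
Proof.
case: hA => -[hs hp hH hC] hann.
split; first exact: sub_annihilator_locally_Cstar.
split; first exact: quot_annihilator_locally_Cstar.
by exists (ideal_quot_split hs hp hH hC hann HI); apply: ideal_quot_split_iso.
Qed.
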